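(* In the setting of the context, let $\hat\theta,\hat\xi$ be perturbed parameters satisfying $\|\hat\theta_i-\theta_i\|_2\le\min\{\sigma_\theta,\frac{1}{2\kappa_\theta},\frac{\rho}{2\kappa_\theta B}\}$ for all $1\le i\le L$ and $\|\hat\xi_i-\xi_i\|_2\le\min\{\sigma_\xi,\frac{\sigma_h}{2\kappa_\xi B},\frac{\rho}{4B\kappa_h\kappa_\xi},\frac{1}{4\kappa_h\kappa_\xi}\}$ for all $0\le i\le L-1$. Fix $1\le i\le L$ and suppose that for all $0\le j<i$ and all $x\in\mathcal{X}$: $\tilde h_j(x,\hat\theta,\hat\xi_{(j-1)})=h_j(x,\theta)$ and $\|g_j(x,\hat\theta,\hat\xi)-h_j(x,\theta)\|_2\le\min\{B,\rho\}$. Then for all $x\in\mathcal{X}$, $\|g_i(x,\hat\theta,\hat\xi)-h_i(x,\theta)\|_2\le\min\{B,\rho\}$, and if moreover $i\le L-1$, then $\tilde h_i(x,\hat\theta,\hat\xi_{(i-1)})=h_i(x,\theta)$.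
   Context: Architecture: layer functions $f_0:\mathcal{X}\times\Theta_0\to\mathbb{R}^d$, $f_i:(\mathbb{R}^d)^i\times\Theta_i\to\mathbb{R}^d$ for $1\le i<L$, $f_L:(\mathbb{R}^d)^L\times\Theta_L\to\mathbb{R}$; $\theta=(\theta_0,\dots,\theta_L)$; $h_0(x,\theta)=f_0(x,\theta_0)$, $h_i(x,\theta)=f_i(h_0(x,\theta),\dots,h_{i-1}(x,\theta),\theta_i)$. Correction functions: $c_0,\dots,c_{L-1}:\mathbb{R}^d\times\Xi_i\to\mathbb{R}^d$ with parameters $\xi=(\xi_0,\dots,\xi_{L-1})$ have radius $\rho$ if for all $0\le i\le L-1$, $x\in\mathcal{X}$ and $\hat h\in\mathbb{R}^d$ with $\|\hat h-h_i(x,\theta)\|_2\le\rho$, $c_i(\hat h,\xi_i)=h_i(x,\theta)$; we assume $c_i,\xi$ have radius $\rho$. Corrected model: $g_0(x,\theta,\xi)=f_0(x,\theta_0)$; $\tilde h_i(x,\theta,\xi)=c_i(g_i(x,\theta,\xi),\xi_i)$ for $0\le i\le L-1$; $g_i(x,\theta,\xi)=f_i(\tilde h_0(x,\theta,\xi),\dots,\tilde h_{i-1}(x,\theta,\xi),\theta_i)$ for $1\le i\le L$. Partially perturbed correction parameters: $\hat\xi_{(j)}=(\hat\xi_0,\dots,\hat\xi_j,\xi_{j+1},\dots,\xi_{L-1})$, with $\hat\xi_{(-1)}=\xi$. Norm on tuples: $|||(v_1,\dots,v_i)|||=\max_j\|v_j\|_2$. Niceness: $f(\cdot,\theta)$ is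 $(\kappa_\theta,\kappa_h,\sigma_h,\sigma_\theta)$-nice on a set $\mathcal{H}$ if for all $\hat\theta$ with $\|\theta-\hat\theta\|_2\le\sigma_\theta$ and all $h\in\mathcal{H}$: $\|f(h,\theta)-f(h,\hat\theta)\|_2\le\kappa_\theta\|\theta-\hat\theta\|_2\max\{|||h|||,1\}$, and for all $\hat h$ with $|||h-\hat h|||\le\sigma_h$: $\|f(h,\hat\theta)-f(\hat h,\hat\theta)\|_2\le\kappa_h|||h-\hat h|||$. Assumptions: for each $i\ge1$, $f_i(\cdot,\theta_i)$ is $(\kappa_\theta,\kappa_h,\sigma_h,\sigma_\theta)$-nice on $\{(h_0(x,\theta),\dots,h_{i-1}(x,\theta)):x\in\mathcal{X}\}$; for each $i$, $\|c_i(h,\xi_i)-c_i(h,\hat\xi)\|_2\le\kappa_\xi\max\{\|h\|_2,1\}\|\xi_i-\hat\xi\|_2$ for all $h\in\mathbb{R}^d$ and $\|\xi_i-\hat\xi\|_2\le\sigma_\xi$; and $\max\{\|h_i(x,\theta)\|_2,1\}\le B$ for all $0\le i\le L$, $x\in\mathcal{X}$. *)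

From HB Require Import structures.
From mathcomp Require Import all_boot all_order all_algebra.
Set Implicit Arguments. Unset Strict Implicit. Unset Printing Implicit Defensive.
Import Order.TTheory GRing.Theory Num.Theory.
Local Open Scope ring_scope.

Section Defs.
Variable R : rcfType.

Definition norm2 (n : nat) (v : 'rV[R]_n) : R :=
  Num.sqrt (\sum_(k < n) v 0 k ^+ 2).

Definition tnorm (d : nat) (s : seq 'rV[R]_d) : R :=
  \big[Num.max/0]_(v <- s) norm2 v.

Definition tsub (d : nat) (s t : seq 'rV[R]_d) : seq 'rV[R]_d :=
  [seq pr.1 - pr.2 | pr <- zip s t].

Definition vdist (d : nat) (a b : 'rV[R]_d) : R := norm2 (a - b).
Definition rdist (a b : R) : R := `|a - b|.

Definition nice (d p : nat) (T : Type) (dist : T -> T -> R)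
    (F : seq 'rV[R]_d -> 'rV[R]_p -> T) (th : 'rV[R]_p)
    (kth kh sh sth : R) (H : seq 'rV[R]_d -> Prop) : Prop :=
  forall thh : 'rV[R]_p, norm2 (th - thh) <= sth ->
  forall hs, H hs ->
    dist (F hs th) (F hs thh) <= kth * norm2 (th - thh) * Num.max (tnorm hs) 1 /\
    (forall hh : seq 'rV[R]_d, size hh = size hs ->
       tnorm (tsub hs hh) <= sh ->
       dist (F hs thh) (F hh thh) <= kh * tnorm (tsub hs hh)).

Variables (X : Type) (d L : nat) (p q : nat -> nat).
Variable f0 : X -> 'rV[R]_(p 0%N) -> 'rV[R]_d.
Variable f : forall i : nat, seq 'rV[R]_d -> 'rV[R]_(p i) -> 'rV[R]_d.
Variable fL : seq 'rV[R]_d -> 'rV[R]_(p L) -> R.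
Variable c : forall i : nat, 'rV[R]_d -> 'rV[R]_(q i) -> 'rV[R]_d.

Definition layer (x : X) (th : forall i, 'rV[R]_(p i)) (n : nat)
    (s : seq 'rV[R]_d) : 'rV[R]_d :=
  match n with
  | 0 => f0 x (th 0%N)
  | n'.+1 => @f n'.+1 s (th n'.+1)
  end.

Fixpoint hseq (x : X) (th : forall i, 'rV[R]_(p i)) (n : nat) : seq 'rV[R]_d :=
  match n with
  | 0 => [::]
  | n'.+1 => rcons (hseq x th n') (layer x th n' (hseq x th n'))
  end.

Definition hval (x : X) (th : forall i, 'rV[R]_(p i)) (i : nat) : 'rV[R]_d :=
  layer x th i (hseq x th i).

Definition hL (x : X) (th : forall i, 'rV[R]_(p i)) : R :=
  fL (hseq x th L) (th L).

Fixpoint htseq (x : X) (th : forall i, 'rV[R]_(p i)) (xi : forall i, 'rV[R]_(q i))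
    (n : nat) : seq 'rV[R]_d :=
  match n with
  | 0 => [::]
  | n'.+1 => rcons (htseq x th xi n')
                   (@c n' (layer x th n' (htseq x th xi n')) (xi n'))
  end.

Definition gval (x : X) (th : forall i, 'rV[R]_(p i)) (xi : forall i, 'rV[R]_(q i))
    (i : nat) : 'rV[R]_d :=
  layer x th i (htseq x th xi i).

Definition gL (x : X) (th : forall i, 'rV[R]_(p i)) (xi : forall i, 'rV[R]_(q i)) : R :=
  fL (htseq x th xi L) (th L).

Definition htval (x : X) (th : forall i, 'rV[R]_(p i)) (xi : forall i, 'rV[R]_(q i))
    (i : nat) : 'rV[R]_d :=
  @c i (gval x th xi i) (xi i).

Definition has_radius (th : forall i, 'rV[R]_(p i)) (xi : forall i, 'rV[R]_(q i))
    (rho : R) : Prop :=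
  forall i : nat, (i < L)%N -> forall (x : X) (hh : 'rV[R]_d),
    norm2 (hh - hval x th i) <= rho -> @c i hh (xi i) = hval x th i.

End Defs.

(* Partially perturbed correction parameters: xi_pre j xi xih = \hat xi_{(j-1)}
   = (xih_0, ..., xih_{j-1}, xi_j, xi_{j+1}, ...). *)
Definition xi_pre (R : Type) (q : nat -> nat) (j : nat)
    (xi xih : forall i, 'rV[R]_(q i)) : forall i, 'rV[R]_(q i) :=
  fun k => if (k < j)%N then xih k else xi k.

From HB Require Import structures.
From mathcomp Require Import all_boot all_order all_algebra.
From mathcomp Require Import ring lra.
Import Order.TTheory GRing.Theory Num.Theory.
Local Open Scope ring_scope.

(* Fix x and write h_j = h_j(x,th), g_j = g_j(x,thh,xih), ht_j = ht_j(x,thh,xih).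
   1. For j < i the corrected state computed with the partially perturbed
      parameters xi_(j-1) only depends on xi_j and on the xih_k with k < j, so
      the induction hypothesis says c_j(g_j, xi_j) = h_j.  Since c_j is
      Lipschitz in its parameter and ||g_j|| <= 2B, the fully perturbed state
      ht_j = c_j(g_j, xih_j) is within 2 kxi B ||xih_j - xi_j|| of h_j; the bound
      on ||xih_j - xi_j|| makes this at most min(sh, rho/(2kh), B/(2kh)).
   2. Niceness of f_i splits g_i - h_i into an input error (at most kh times
      the tuple error of step 1) and a parameter error (at most
      kth ||thh_i - th_i|| B); each contributes at most half of min(B, rho).
   3. If i <= L-1, then g_i lies within rho of h_i, so the correction c_i
      with the unperturbed parameter xi_i restores h_i exactly. *)

Section EuclideanNorm.
Context {R : rcfType}.

(* Cauchy-Schwarz inequality for finite sums, via Lagrange's identity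
   sum_{i,j} (a_i b_j - a_j b_i)^2 = 2 (|a|^2 |b|^2 - <a,b>^2). *)
Lemma sum_CauchySchwarz {n : nat} (a b : 'I_n -> R) :
  (\sum_k a k * b k) ^+ 2 <= (\sum_k a k ^+ 2) * (\sum_k b k ^+ 2).
Proof.
have lagrange : \sum_i \sum_j (a i * b j - a j * b i) ^+ 2 =
    2 * ((\sum_k a k ^+ 2) * (\sum_k b k ^+ 2) - (\sum_k a k * b k) ^+ 2).
  have -> : \sum_i \sum_j (a i * b j - a j * b i) ^+ 2 =
      \sum_i (\sum_j (a i ^+ 2 * b j ^+ 2) + \sum_j (a j ^+ 2 * b i ^+ 2)
              - 2 * \sum_j (a i * b i * (a j * b j))).
    apply: eq_bigr => i _; rewrite mulr_sumr -big_split -sumrB /=.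
    by apply: eq_bigr => j _; ring.
  rewrite sumrB big_split /= -mulr_sumr.
  rewrite (exchange_big _ _ _ _ _ (fun i j => a j ^+ 2 * b i ^+ 2)) /=.
  have -> : (\sum_k a k ^+ 2) * (\sum_k b k ^+ 2) =
            \sum_i \sum_j (a i ^+ 2 * b j ^+ 2).
    by rewrite mulr_suml; apply: eq_bigr => i _; rewrite mulr_sumr.
  have -> : (\sum_k a k * b k) ^+ 2 = \sum_i \sum_j (a i * b i * (a j * b j)).
    by rewrite expr2 mulr_suml; apply: eq_bigr => i _; rewrite mulr_sumr.
  ring.
have : 0 <= \sum_i \sum_j (a i * b j - a j * b i) ^+ 2.
  by apply: sumr_ge0 => i _; apply: sumr_ge0 => j _; apply: sqr_ge0.
by rewrite lagrange; lra.
Qed.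

Lemma norm2_ge0 {n : nat} (v : 'rV[R]_n) : 0 <= norm2 v.
Proof. exact: sqrtr_ge0. Qed.

Lemma norm2N {n : nat} (v : 'rV[R]_n) : norm2 (- v) = norm2 v.
Proof. by rewrite /norm2; congr Num.sqrt; apply: eq_bigr => k _; rewrite mxE sqrrN. Qed.

Lemma norm2B {n : nat} (u v : 'rV[R]_n) : norm2 (u - v) = norm2 (v - u).
Proof. by rewrite -norm2N opprB. Qed.

Lemma norm2D {n : nat} (u v : 'rV[R]_n) : norm2 (u + v) <= norm2 u + norm2 v.
Proof.
rewrite /norm2.
set A := \sum_k u 0 k ^+ 2; set C := \sum_k v 0 k ^+ 2.
set S := \sum_k u 0 k * v 0 k.
have A0 : 0 <= A by apply: sumr_ge0 => k _; apply: sqr_ge0.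
have C0 : 0 <= C by apply: sumr_ge0 => k _; apply: sqr_ge0.
have -> : \sum_k (u + v) 0 k ^+ 2 = A + C + 2 * S.
  by rewrite /A /C /S mulr_sumr -!big_split /=; apply: eq_bigr => k _; rewrite mxE; ring.
have HS : S <= Num.sqrt A * Num.sqrt C.
  rewrite -sqrtrM // (le_trans (ler_norm S)) // -sqrtr_sqr ler_wsqrtr //.
  exact: (sum_CauchySchwarz (fun k => u 0 k) (fun k => v 0 k)).
have S0 : 0 <= Num.sqrt A + Num.sqrt C by rewrite addr_ge0 // sqrtr_ge0.
rewrite -(ger0_norm S0) -sqrtr_sqr ler_wsqrtr //.
by rewrite sqrrD !sqr_sqrtr //; lra.
Qed.

Lemma norm2_tri {n : nat} (a b c : 'rV[R]_n) :
  norm2 (a - c) <= norm2 (a - b) + norm2 (b - c).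
Proof. by have := norm2D (a - b) (b - c); rewrite addrA subrK. Qed.

Lemma tnorm_map_le (d : nat) (T : eqType) (F : T -> 'rV[R]_d) (s : seq T) (M : R) :
  0 <= M -> (forall k, k \in s -> norm2 (F k) <= M) -> tnorm (map F s) <= M.
Proof.
move=> M0 HF; rewrite /tnorm big_map big_seq.
apply: (big_ind (fun y => y <= M)) => // y z Hy Hz.
by rewrite ge_max Hy Hz.
Qed.

Lemma tsub_map (d : nat) (T : Type) (F G : T -> 'rV[R]_d) (s : seq T) :
  tsub (map F s) (map G s) = map (fun k => F k - G k) s.
Proof. by elim: s => [|a s IH] //=; rewrite /tsub /= -IH. Qed.

End EuclideanNorm.

Section LayerSequences.
Context {R : rcfType} {X : Type} {d : nat} {p q : nat -> nat}.
Context {f0 : X -> 'rV[R]_(p 0%N) -> 'rV[R]_d}.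
Context {f : forall i : nat, seq 'rV[R]_d -> 'rV[R]_(p i) -> 'rV[R]_d}.
Context {c : forall i : nat, 'rV[R]_d -> 'rV[R]_(q i) -> 'rV[R]_d}.

Let iotaSr (n : nat) : iota 0 n.+1 = rcons (iota 0 n) n.
Proof. by rewrite -addn1 iotaD cats1. Qed.

Lemma hseq_map x th (n : nat) :
  hseq f0 f x th n = [seq hval f0 f x th k | k <- iota 0 n].
Proof. by elim: n => [|n IH] //; rewrite iotaSr map_rcons -IH. Qed.

Lemma htseq_map x th xi (n : nat) :
  htseq f0 f c x th xi n = [seq htval f0 f c x th xi k | k <- iota 0 n].
Proof. by elim: n => [|n IH] //; rewrite iotaSr map_rcons -IH. Qed.

Lemma htseq_ext x th xi1 xi2 (n : nat) :
  (forall k, (k < n)%N -> xi1 k = xi2 k) ->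
  htseq f0 f c x th xi1 n = htseq f0 f c x th xi2 n.
Proof.
elim: n => [|n IH] Hxi //=.
by rewrite IH ?Hxi // => k Hk; apply: Hxi; exact: ltnW.
Qed.

Lemma htval_xi_pre x th xi xih (j : nat) :
  htval f0 f c x th (xi_pre j xi xih) j = c j (gval f0 f c x th xih j) (xi j).
Proof.
rewrite /htval /gval (@htseq_ext _ _ _ xih) => [|k kj]; last by rewrite /xi_pre kj.
by rewrite /xi_pre ltnn.
Qed.

Lemma tnorm_tsub_states {x th thh xih} {n : nat} {M : R} :
  0 <= M ->
  (forall j, (j < n)%N -> norm2 (hval f0 f x th j - htval f0 f c x thh xih j) <= M) ->
  tnorm (tsub (hseq f0 f x th n) (htseq f0 f c x thh xih n)) <= M.
Proof.
move=> M0 HM; rewrite hseq_map htseq_map tsub_map; apply: tnorm_map_le => // k.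
by rewrite mem_iota add0n => /andP[_]; exact: HM.
Qed.

Lemma tnorm_hseq_le {x th} {n : nat} {B : R} :
  1 <= B -> (forall j, (j < n)%N -> norm2 (hval f0 f x th j) <= B) ->
  Num.max (tnorm (hseq f0 f x th n)) 1 <= B.
Proof.
move=> B1 HB; rewrite ge_max B1 andbT hseq_map; apply: tnorm_map_le; first lra.
by move=> k; rewrite mem_iota add0n => /andP[_]; exact: HB.
Qed.

Lemma size_htseq_hseq {x th thh xih} {n : nat} :
  size (htseq f0 f c x thh xih n) = size (hseq f0 f x th n).
Proof. by rewrite hseq_map htseq_map !size_map. Qed.

End LayerSequences.

Section Estimates.
Context {R : rcfType}.

Lemma correction_param_error {d m : nat} {cj : 'rV[R]_d -> 'rV[R]_m -> 'rV[R]_d}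
    {xj xjh : 'rV[R]_m} {g h : 'rV[R]_d} {kxi sxi B : R} :
  0 < kxi -> 1 <= B ->
  (norm2 (xj - xjh) <= sxi ->
     norm2 (cj g xj - cj g xjh) <= kxi * Num.max (norm2 g) 1 * norm2 (xj - xjh)) ->
  norm2 (xjh - xj) <= sxi -> cj g xj = h ->
  norm2 (g - h) <= B -> norm2 h <= B ->
  norm2 (h - cj g xjh) <= kxi * (2 * B) * norm2 (xjh - xj).
Proof.
move=> kxi0 B1 Lip Hs Eh HgB HhB.
rewrite norm2B in Hs; rewrite -Eh [norm2 (xjh - _)]norm2B.
apply: (le_trans (Lip Hs)).
have gB : Num.max (norm2 g) 1 <= 2 * B.
  have := norm2D (g - h) h; rewrite subrK ge_max => Hg.
  by apply/andP; split; lra.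
have d0 := norm2_ge0 (xj - xjh).
by have := mulr_ge0 (ltW kxi0) d0; nra.
Qed.

Lemma correction_budget {kxi kh sxi sh rho B e delta : R} :
  0 < kxi -> 0 < kh -> 1 <= B -> 0 <= delta ->
  e <= kxi * (2 * B) * delta ->
  delta <= Num.min sxi (Num.min (sh / (2 * kxi * B))
             (Num.min (rho / (4 * B * kh * kxi)) (1 / (4 * kh * kxi)))) ->
  e <= Num.min sh (Num.min (rho / (2 * kh)) (B / (2 * kh))).
Proof.
move=> kxi0 kh0 B1 d0 He; rewrite !le_min => /and4P[_ H1 H2 H3].
have kh2 : 0 < 2 * kh by lra.
have B0 : 0 < B by lra.
rewrite ler_pdivlMr in H1; last by rewrite !mulr_gt0.
rewrite ler_pdivlMr in H2; last by rewrite !mulr_gt0.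
rewrite ler_pdivlMr in H3; last by rewrite !mulr_gt0.
by rewrite !ler_pdivlMr //; apply/and3P; split; nra.
Qed.

Lemma perturbation_budget {kth kh sth sh rho B a e m : R} :
  0 < kth -> 0 < kh -> 1 <= B -> 0 <= a -> m <= B ->
  a <= Num.min sth (Num.min (1 / (2 * kth)) (rho / (2 * kth * B))) ->
  e <= Num.min sh (Num.min (rho / (2 * kh)) (B / (2 * kh))) ->
  kh * e + kth * a * m <= Num.min B rho.
Proof.
move=> kth0 kh0 B1 a0 mB; rewrite !le_min => /and3P[_ Ha1 Ha2] /and3P[_ He1 He2].
have kth2 : 0 < 2 * kth by lra.
have kh2 : 0 < 2 * kh by lra.
have kthB : 0 < 2 * kth * B by rewrite mulr_gt0 //; lra.
rewrite ler_pdivlMr // in Ha1; rewrite ler_pdivlMr // in Ha2.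
rewrite ler_pdivlMr // in He1; rewrite ler_pdivlMr // in He2.
have ka : 0 <= kth * a by apply: mulr_ge0 => //; apply: ltW.
have kam : kth * a * m <= kth * a * B by nra.
by apply/andP; split; nra.
Qed.

Lemma nice_layer_deviation {d r : nat} {T : Type} {dist : T -> T -> R}
    {F : seq 'rV[R]_d -> 'rV[R]_r -> T} {th thh : 'rV[R]_r}
    {kth kh sh sth rho B : R} {H : seq 'rV[R]_d -> Prop} {hs hh : seq 'rV[R]_d} :
  (forall a b c, dist a c <= dist a b + dist b c) ->
  0 < kth -> 0 < kh -> 1 <= B ->
  nice dist F th kth kh sh sth H -> H hs -> size hh = size hs ->
  Num.max (tnorm hs) 1 <= B ->
  norm2 (th - thh) <= Num.min sth (Num.min (1 / (2 * kth)) (rho / (2 * kth * B))) ->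
  tnorm (tsub hs hh) <= Num.min sh (Num.min (rho / (2 * kh)) (B / (2 * kh))) ->
  dist (F hs th) (F hh thh) <= Num.min B rho.
Proof.
move=> dist_tri kth0 kh0 B1 Fnice Hhs sz hsB Hth Hin.
have Hsth : norm2 (th - thh) <= sth by move: Hth; rewrite le_min => /andP[].
have Hsh : tnorm (tsub hs hh) <= sh by move: Hin; rewrite le_min => /andP[].
have [Dparam Dinput] := Fnice thh Hsth hs Hhs.
apply: (le_trans (dist_tri _ (F hs thh) _)).
apply: le_trans; last exact: (perturbation_budget kth0 kh0 B1 (norm2_ge0 _) hsB Hth Hin).
by rewrite addrC; apply: lerD; [exact: Dinput | exact: Dparam].
Qed.

End Estimates.

Theorem mainTheorem11 (R : rcfType) (X : Type) (d L : nat) (p q : nat -> nat)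
    (f0 : X -> 'rV[R]_(p 0%N) -> 'rV[R]_d)
    (f : forall i : nat, seq 'rV[R]_d -> 'rV[R]_(p i) -> 'rV[R]_d)
    (fL : seq 'rV[R]_d -> 'rV[R]_(p L) -> R)
    (c : forall i : nat, 'rV[R]_d -> 'rV[R]_(q i) -> 'rV[R]_d)
    (th : forall i : nat, 'rV[R]_(p i)) (xi : forall i : nat, 'rV[R]_(q i))
    (rho kth kh sh sth kxi sxi B : R)
    (Hkth : 0 < kth) (Hkh : 0 < kh) (Hkxi : 0 < kxi)
    (* the correction functions have radius rho *)
    (Hrad : has_radius L f0 f c th xi rho)
    (* niceness of f_i(., th_i), 1 <= i <= L-1, on {(h_0,...,h_{i-1})(x,th)} *)
    (Hnice : forall i : nat, (1 <= i < L)%N ->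
        nice (@vdist R d) (f i) (th i) kth kh sh sth
             (fun hs => exists x : X, hs = hseq f0 f x th i))
    (* niceness of f_L(., th_L) *)
    (HniceL : nice (@rdist R) fL (th L) kth kh sh sth
             (fun hs => exists x : X, hs = hseq f0 f x th L))
    (* Lipschitzness of c_i in its parameter *)
    (Hc : forall i : nat, (i < L)%N -> forall (h : 'rV[R]_d) (xh : 'rV[R]_(q i)),
        norm2 (xi i - xh) <= sxi ->
        norm2 (c i h (xi i) - c i h xh) <= kxi * Num.max (norm2 h) 1 * norm2 (xi i - xh))
    (* boundedness of the hidden states *)
    (HB : forall x : X, (forall i : nat, (i < L)%N -> Num.max (norm2 (hval f0 f x th i)) 1 <= B)
                        /\ Num.max `|hL f0 f fL x th| 1 <= B)
    (thh : forall i : nat, 'rV[R]_(p i)) (xih : forall i : nat, 'rV[R]_(q i))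
    (Hthh : forall i : nat, (1 <= i <= L)%N ->
        norm2 (thh i - th i) <=
          Num.min sth (Num.min (1 / (2 * kth)) (rho / (2 * kth * B))))
    (Hxih : forall i : nat, (i < L)%N ->
        norm2 (xih i - xi i) <=
          Num.min sxi (Num.min (sh / (2 * kxi * B))
                (Num.min (rho / (4 * B * kh * kxi)) (1 / (4 * kh * kxi)))))
    (i : nat) (Hi : (1 <= i <= L)%N)
    (Hprev : forall j : nat, (j < i)%N -> forall x : X,
        htval f0 f c x thh (xi_pre j xi xih) j = hval f0 f x th j /\
        norm2 (gval f0 f c x thh xih j - hval f0 f x th j) <= Num.min B rho) :
  forall x : X,
    ((i < L)%N -> norm2 (gval f0 f c x thh xih i - hval f0 f x th i) <= Num.min B rho) /\
    (i = L -> `|gL f0 f fL c x thh xih - hL f0 f fL x th| <= Num.min B rho) /\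
    ((i <= L.-1)%N -> htval f0 f c x thh (xi_pre i xi xih) i = hval f0 f x th i).
Proof.
move=> x; case: i Hi Hprev => [//|i] Hi Hprev.
have iL : (i < L)%N by case/andP: Hi.
have [HBh HBL] := HB x.
have B1 : 1 <= B by move: HBL; rewrite ge_max => /andP[].
have hB j : (j < L)%N -> norm2 (hval f0 f x th j) <= B.
  by move=> jL; move: (HBh j jL); rewrite ge_max => /andP[].
have Hstate j : (j < i.+1)%N ->
    norm2 (hval f0 f x th j - htval f0 f c x thh xih j) <=
    Num.min sh (Num.min (rho / (2 * kh)) (B / (2 * kh))).
  move=> ji; have jL : (j < L)%N := leq_trans ji iL.
  have [Eh Eg] := Hprev j ji x; rewrite htval_xi_pre in Eh.
  have Hsxi : norm2 (xih j - xi j) <= sxi by move: (Hxih j jL); rewrite le_min => /andP[].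
  have HgB : norm2 (gval f0 f c x thh xih j - hval f0 f x th j) <= B.
    by move: Eg; rewrite le_min => /andP[].
  apply: (correction_budget Hkxi Hkh B1 (norm2_ge0 _) _ (Hxih j jL)).
  exact: (correction_param_error Hkxi B1 (@Hc j jL _ _) Hsxi Eh HgB (hB j jL)).
have Hinput := tnorm_tsub_states (le_trans (norm2_ge0 _) (Hstate 0%N erefl)) Hstate.
have hsB := tnorm_hseq_le B1 (fun j ji => hB j (leq_trans ji iL)).
have Hth := Hthh i.+1 Hi; rewrite norm2B in Hth.
have Hlayer : (i.+1 < L)%N ->
    norm2 (gval f0 f c x thh xih i.+1 - hval f0 f x th i.+1) <= Num.min B rho.
  move=> iL'; rewrite norm2B.
  exact: (nice_layer_deviation norm2_tri Hkth Hkh B1 (Hnice i.+1 iL')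
            (ex_intro _ x erefl) size_htseq_hseq hsB Hth Hinput).
split; first exact: Hlayer.
split.
-
  move=> EiL; subst L; rewrite distrC.
  exact: (nice_layer_deviation (fun a b c => ler_distD b a c) Hkth Hkh B1 HniceL
            (ex_intro _ x erefl) size_htseq_hseq hsB Hth Hinput).
-
  move=> iL1; have iL' : (i.+1 < L)%N by move: iL1 iL; case: (L).
  rewrite htval_xi_pre; apply: Hrad => //.
  by move: (Hlayer iL'); rewrite le_min => /andP[].
Qed.
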